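(* If $(X,\mathcal{H})$ is a contraction flow, then $\mathcal{H}$ is a continuous absorptive action on $X$.
   Context: An $\mathbb{R}$-group is an abelian group $E$ (operation written multiplicatively) whose underlying set is a subset of $\mathbb{R}$ containing all positive integers, such that: (RG1) with the natural order of $\mathbb{R}$, $E$ is a totally ordered group; (RG2) with the topology induced from $\mathbb{R}$, $E$ is a locally compact group; (RG3) there is a nonconstant continuous homomorphism $h:E\to\mathbb{R}_+^*$ such that for every $\alpha\in E$ the set $\{\varepsilon\in E:\varepsilon\ge\alpha\}$ is integrable for $h\cdot m$, $m$ a Haar measure on $E$. $e$ is the identity of $E$, $\varepsilon^{-1}$ the group inverse; inequalities refer to the order of $\mathbb{R}$. An action of $E$ on $X$ is a family $(H_\varepsilon)_{\varepsilon\in E}$ of bijections of $X$ with $H_\varepsilon\circ H_{\varepsilon'}=H_{\varepsilon\varepsilon'}$, $H_e=\mathrm{id}_X$; continuous if $(\varepsilon,x)\mapsto H_\varepsilon(x)$ is continuous on $E\times X$; absorptive if some $\omega\in X$ satisfies: for every neighbourhood $V$ of $\omega$ and every $x\in X$ there are a neighbourhood $U$ of $x$ and $\alpha\in E$ with $H_{\varepsilon^{-1}}(U)\subset V$ for all $\varepsilon\le\alpha$. A contraction flow is a pair $(X,\mathcal{H})$ where $X$ is a complete locally compact metric space (metric $d$) not reduced to one point, and $\mathcal{H}=(H_\varepsilon)_{\varepsilon\in E}$ is an action of an $\mathbb{R}$-group $E$ on $X$ such that: (i) for each $x\in X$, $\varepsilon\mapsto H_\varepsilon(x)$ is continuous $E\to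 X$; (ii) for each $\varepsilon\in E$, $\sup_{x\neq y} d(H_\varepsilon(x),H_\varepsilon(y))/d(x,y)<+\infty$; (iii) $\lim_{\varepsilon\to+\infty}\sup_{x\neq y} d(H_\varepsilon(x),H_\varepsilon(y))/d(x,y)=0$. *)

From Stdlib Require Import Reals List.
Open Scope R_scope.

(* R-groups.  E is given as a subset [E : R -> Prop] of R together with *)
(* an abstract (multiplicatively written) group law [mul], unit [e],   *)
(* inverse [inv]; only their behaviour on E matters.                   *)

Definition abelian_group_on (E : R -> Prop) (mul : R -> R -> R) (e : R)
    (inv : R -> R) : Prop :=
  (forall x y, E x -> E y -> E (mul x y)) /\
  E e /\
  (forall x, E x -> E (inv x)) /\
  (forall x y z, E x -> E y -> E z -> mul (mul x y) z = mul x (mul y z)) /\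
  (forall x y, E x -> E y -> mul x y = mul y x) /\
  (forall x, E x -> mul e x = x) /\
  (forall x, E x -> mul (inv x) x = e).

Definition cont_on (E : R -> Prop) (f : R -> R) : Prop :=
  forall x, E x -> forall eps, 0 < eps -> exists del, 0 < del /\
    forall y, E y -> Rabs (y - x) < del -> Rabs (f y - f x) < eps.

Definition cont2_on (E : R -> Prop) (f : R -> R -> R) : Prop :=
  forall x y, E x -> E y -> forall eps, 0 < eps -> exists del, 0 < del /\
    forall x' y', E x' -> E y' -> Rabs (x' - x) < del -> Rabs (y' - y) < del ->
      Rabs (f x' y' - f x y) < eps.

Definition lsc_on (E : R -> Prop) (f : R -> R) : Prop :=
  forall x, E x -> forall eps, 0 < eps -> exists del, 0 < del /\
    forall y, E y -> Rabs (y - x) < del -> f x - eps < f y.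

Definition locally_compact_sub (E : R -> Prop) : Prop :=
  forall x, E x -> exists K : R -> Prop, compact K /\
    (forall y, K y -> E y) /\
    exists del, 0 < del /\ forall y, E y -> Rabs (y - x) < del -> K y.

Definition RG1 (E : R -> Prop) (mul : R -> R -> R) : Prop :=
  forall x y z, E x -> E y -> E z -> x <= y -> mul x z <= mul y z.

Definition RG2 (E : R -> Prop) (mul : R -> R -> R) (inv : R -> R) : Prop :=
  cont2_on E mul /\ cont_on E inv /\ locally_compact_sub E.

Definition Cc (E : R -> Prop) (g : R -> R) : Prop :=
  cont_on E g /\
  exists K : R -> Prop, compact K /\ (forall y, K y -> E y) /\
    (forall x, E x -> ~ K x -> g x = 0).

(* A Haar measure on E, given as its (Radon) integral: a nonzero positive
   linear functional on C_c(E), invariant under translations of E. *)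
Definition haar_integral (E : R -> Prop) (mul : R -> R -> R)
    (I : (R -> R) -> R) : Prop :=
  (forall g g', Cc E g -> (forall x, E x -> g x = g' x) -> I g = I g') /\
  (forall g1 g2, Cc E g1 -> Cc E g2 -> I (fun x => g1 x + g2 x) = I g1 + I g2) /\
  (forall c g, Cc E g -> I (fun x => c * g x) = c * I g) /\
  (forall g, Cc E g -> (forall x, E x -> 0 <= g x) -> 0 <= I g) /\
  (forall a g, E a -> Cc E g -> I (fun x => g (mul a x)) = I g) /\
  (exists g, Cc E g /\ (forall x, E x -> 0 <= g x) /\ 0 < I g).

(* Integrability of a nonnegative upper semicontinuous function f for the
   measure with integral I: finiteness of the upper integral, i.e. f is
   dominated by a lower semicontinuous phi whose (inner) integral
   sup { I g | g in C_c(E), 0 <= g <= phi } is finite. *)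
Definition integrable_usc (E : R -> Prop) (I : (R -> R) -> R) (f : R -> R) : Prop :=
  exists M phi, lsc_on E phi /\ (forall x, E x -> f x <= phi x) /\
    forall g, Cc E g -> (forall x, E x -> 0 <= g x <= phi x) -> I g <= M.

Definition RG3 (E : R -> Prop) (mul : R -> R -> R) : Prop :=
  exists h : R -> R,
    (forall x, E x -> 0 < h x) /\
    (forall x y, E x -> E y -> h (mul x y) = h x * h y) /\
    cont_on E h /\
    (exists x y, E x /\ E y /\ h x <> h y) /\
    exists I, haar_integral E mul I /\
      forall alpha, E alpha ->
        integrable_usc E I
          (fun x => h x * (if Rle_dec alpha x then 1 else 0)).

Definition R_group (E : R -> Prop) (mul : R -> R -> R) (e : R) (inv : R -> R)
  : Prop :=
  abelian_group_on E mul e inv /\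
  (forall n : nat, E (INR (S n))) /\
  RG1 E mul /\ RG2 E mul inv /\ RG3 E mul.

Section MS.
Variable M : Metric_Space.
Let X := Base M.
Let d := dist M.

Definition ms_open (U : X -> Prop) : Prop :=
  forall x, U x -> exists r, 0 < r /\ forall y, d x y < r -> U y.

Definition ms_nbhd (x : X) (V : X -> Prop) : Prop :=
  exists r, 0 < r /\ forall y, d x y < r -> V y.

Definition ms_compact (K : X -> Prop) : Prop :=
  forall (J : Type) (U : J -> X -> Prop),
    (forall j, ms_open (U j)) -> (forall x, K x -> exists j, U j x) ->
    exists l : list J, forall x, K x -> exists j, In j l /\ U j x.

Definition ms_locally_compact : Prop :=
  forall x, exists K, ms_compact K /\ ms_nbhd x K.

Definition ms_cauchy (u : nat -> X) : Prop :=
  forall eps, 0 < eps -> exists N, forall n m, (n >= N)%nat -> (m >= N)%nat ->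
    d (u n) (u m) < eps.

Definition ms_complete : Prop :=
  forall u, ms_cauchy u -> exists l, forall eps, 0 < eps -> exists N,
    forall n, (n >= N)%nat -> d (u n) l < eps.
End MS.

(* H : R -> X -> X, only relevant for indices in E.                    *)

Definition action (E : R -> Prop) (mul : R -> R -> R) (e : R)
    (M : Metric_Space) (H : R -> Base M -> Base M) : Prop :=
  (forall eps, E eps ->
     (forall x y, H eps x = H eps y -> x = y) /\ (forall y, exists x, H eps x = y)) /\
  (forall eps eps', E eps -> E eps' -> forall x, H eps (H eps' x) = H (mul eps eps') x) /\
  (forall x, H e x = x).

Definition contraction_flow (E : R -> Prop) (mul : R -> R -> R) (e : R)
    (inv : R -> R) (M : Metric_Space) (H : R -> Base M -> Base M) : Prop :=
  ms_complete M /\ ms_locally_compact M /\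
  (exists x y : Base M, x <> y) /\
  R_group E mul e inv /\
  action E mul e M H /\
  (forall x, forall eps, E eps -> forall eta, 0 < eta -> exists del, 0 < del /\
     forall eps', E eps' -> Rabs (eps' - eps) < del ->
       dist M (H eps x) (H eps' x) < eta) /\
  (forall eps, E eps -> exists L, forall x y, x <> y ->
     dist M (H eps x) (H eps y) / dist M x y <= L) /\
  (forall eta, 0 < eta -> exists A, forall eps, E eps -> A <= eps ->
     forall x y, x <> y -> dist M (H eps x) (H eps y) / dist M x y <= eta).

Definition continuous_action (E : R -> Prop) (M : Metric_Space)
    (H : R -> Base M -> Base M) : Prop :=
  forall eps x, E eps -> forall eta, 0 < eta -> exists del, 0 < del /\
    forall eps' x', E eps' -> Rabs (eps' - eps) < del -> dist M x x' < del ->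
      dist M (H eps x) (H eps' x') < eta.

Definition absorptive (E : R -> Prop) (inv : R -> R) (M : Metric_Space)
    (H : R -> Base M -> Base M) : Prop :=
  exists omega : Base M, forall V, ms_nbhd M omega V -> forall x,
    exists U, ms_nbhd M x U /\ exists alpha, E alpha /\
      forall eps, E eps -> eps <= alpha -> forall u, U u -> V (H (inv eps) u).

(* By (iii) the maps H eps are contractions for eps large. Joint continuity:
   near a given eps, every H eps' factors as a fixed Lipschitz map composed with
   a 1-Lipschitz H eps'' (continuity of the group law keeps eps'' large), so the
   H eps' are equi-Lipschitz there and (i) upgrades to joint continuity.
   Absorption: a contracting H t0 has a fixed point w by Banach's theorem, and
   w is fixed by every H s because H s commutes with H t0; for eps <= t^-1 the
   map H (eps^-1) contracts by an arbitrarily small factor towards w. *)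

From Stdlib Require Import Reals Lra Lia Classical.
Open Scope R_scope.

Section Lipschitz.
Variable M : Metric_Space.

Definition lipschitz (f : Base M -> Base M) (K : R) : Prop :=
  forall x y, dist M (f x) (f y) <= K * dist M x y.

Lemma lipschitz_of_ratio_le (f : Base M -> Base M) (L : R) :
  (forall x y, x <> y -> dist M (f x) (f y) / dist M x y <= L) ->
  lipschitz f (Rmax 0 L).
Proof.
  intros HL x y.
  destruct (classic (x = y)) as [<- | Hxy].
  - rewrite !(proj2 (dist_refl M _ _) eq_refl); lra.
  - assert (Hpos : 0 < dist M x y).
    { destruct (dist_pos M x y) as [| Hz]; [lra |].
      now destruct Hxy; apply dist_refl. }
    pose proof (HL x y Hxy) as HLx.
    pose proof (Rmax_r 0 L) as HLm.
    replace (dist M (f x) (f y))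
      with (dist M (f x) (f y) / dist M x y * dist M x y) by (field; lra).
    apply Rmult_le_compat_r; lra.
Qed.

Lemma lipschitz_comp (f g : Base M -> Base M) (Kf Kg : R) :
  0 <= Kf -> lipschitz f Kf -> lipschitz g Kg -> lipschitz (fun x => f (g x)) (Kf * Kg).
Proof.
  intros HKf Hf Hg x y.
  rewrite Rmult_assoc.
  apply (Rle_trans _ _ _ (Hf (g x) (g y))).
  now apply Rmult_le_compat_l.
Qed.

Lemma lipschitz_fixed_point_unique (f : Base M -> Base M) (k : R) (w w' : Base M) :
  k < 1 -> lipschitz f k -> f w = w -> f w' = w' -> w = w'.
Proof.
  intros Hk Hf Hw Hw'.
  apply dist_refl.
  pose proof (Hf w w') as Hd; rewrite Hw, Hw' in Hd.
  pose proof (dist_pos M w w'); nra.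
Qed.

Lemma iterate_contraction_cauchy (f : Base M -> Base M) (k : R) (x0 : Base M) :
  0 <= k < 1 -> lipschitz f k ->
  forall n m, (n <= m)%nat ->
    (1 - k) * dist M (Nat.iter n f x0) (Nat.iter m f x0)
      <= k ^ n * dist M x0 (f x0).
Proof.
  intros Hk Hf.
  set (u := fun n => Nat.iter n f x0); set (D := dist M x0 (f x0)).
  assert (HD : 0 <= D) by (pose proof (dist_pos M x0 (f x0)); unfold D; lra).
  assert (Hstep : forall n, dist M (u n) (u (S n)) <= k ^ n * D).
  { induction n as [| n IH]; [simpl; unfold u, D; simpl; lra |].
    apply (Rle_trans _ _ _ (Hf (u n) (u (S n)))).
    replace (k ^ S n * D) with (k * (k ^ n * D)) by (simpl; ring).
    apply Rmult_le_compat_l; lra. }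
  assert (Htail : forall n j,
      (1 - k) * dist M (u n) (u (n + j)%nat) <= (k ^ n - k ^ (n + j)) * D).
  { intros n j; induction j as [| j IH].
    - rewrite Nat.add_0_r, (proj2 (dist_refl M _ _) eq_refl); lra.
    - replace (n + S j)%nat with (S (n + j)) by lia.
      pose proof (dist_tri M (u n) (u (S (n + j))) (u (n + j)%nat)) as Htri.
      pose proof (Hstep (n + j)%nat) as Hs.
      assert (Hstep' : (1 - k) * dist M (u (n + j)%nat) (u (S (n + j)))
                      <= (1 - k) * (k ^ (n + j) * D))
        by (apply Rmult_le_compat_l; lra).
      simpl pow; nra. }
  intros n m Hnm; fold (u n) (u m) D.
  replace m with (n + (m - n))%nat by lia.
  pose proof (Htail n (m - n)%nat).
  pose proof (pow_le k (n + (m - n)) (proj1 Hk)); nra.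
Qed.

Lemma contraction_fixed_point (f : Base M -> Base M) (k : R) :
  ms_complete M -> Base M -> 0 <= k < 1 -> lipschitz f k -> exists w, f w = w.
Proof.
  intros Hcomplete x0 Hk Hf.
  set (u := fun n => Nat.iter n f x0); set (D := dist M x0 (f x0)).
  assert (HD : 0 <= D) by (pose proof (dist_pos M x0 (f x0)); unfold D; lra).
  assert (Hcauchy : ms_cauchy M u).
  { intros eps Heps.
    assert (Hsmall : 0 < eps * (1 - k) / (D + 1))
      by (apply Rdiv_lt_0_compat; nra).
    destruct (pow_lt_1_zero k ltac:(rewrite Rabs_pos_eq; lra) _ Hsmall) as [N HN].
    assert (Hbound : forall p q, (p >= N)%nat -> (p <= q)%nat -> dist M (u p) (u q) < eps).
    { intros p q Hp Hpq.
      pose proof (HN p Hp) as Hpow; rewrite Rabs_pos_eq in Hpow by (apply pow_le; lra).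
      assert (Hpow' : k ^ p * (D + 1) < eps * (1 - k)).
      { apply (Rmult_lt_compat_r (D + 1)) in Hpow; [| lra].
        now replace (eps * (1 - k) / (D + 1) * (D + 1)) with (eps * (1 - k))
          in Hpow by (field; lra). }
      pose proof (iterate_contraction_cauchy f k x0 Hk Hf p q Hpq) as Hpq'.
      fold (u p) (u q) D in Hpq'.
      pose proof (pow_le k p (proj1 Hk)).
      apply (Rmult_lt_reg_l (1 - k)); [lra |].
      rewrite (Rmult_comm (1 - k) eps); nra. }
    exists N; intros n m Hn Hm.
    destruct (Nat.le_ge_cases n m) as [Hnm | Hmn].
    - now apply Hbound.
    - rewrite dist_sym; now apply Hbound. }
  destruct (Hcomplete u Hcauchy) as [l Hl].
  exists l; apply dist_refl.
  destruct (dist_pos M (f l) l) as [Hgt | Hz]; [exfalso | exact Hz].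
  destruct (Hl (dist M (f l) l / 2) ltac:(lra)) as [N HN].
  pose proof (HN N (le_n _)) as HN0.
  pose proof (HN (S N) (le_S _ _ (le_n _))) as HN1.
  pose proof (dist_tri M (f l) l (u (S N))) as Htri.
  pose proof (Hf l (u N)) as Hfl; rewrite (dist_sym M l (u N)) in Hfl.
  change (u (S N)) with (f (u N)) in *.
  pose proof (dist_pos M (u N) l); nra.
Qed.

End Lipschitz.
Lemma continuous_action_of_locally_equilipschitz (E : R -> Prop) (M : Metric_Space)
    (H : R -> Base M -> Base M) :
  (forall x eps, E eps -> forall eta, 0 < eta -> exists del, 0 < del /\
     forall eps', E eps' -> Rabs (eps' - eps) < del -> dist M (H eps x) (H eps' x) < eta) ->
  (forall eps, E eps -> exists del K, 0 < del /\ 0 <= K /\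
     forall eps', E eps' -> Rabs (eps' - eps) < del -> lipschitz M (H eps') K) ->
  continuous_action E M H.
Proof.
  intros Hpt Hloc eps x Heps eta Heta.
  destruct (Hpt x eps Heps (eta / 2) ltac:(lra)) as [del1 [Hdel1 Horbit]].
  destruct (Hloc eps Heps) as [del2 [K [Hdel2 [HK Hlip]]]].
  set (del3 := eta / (2 * (K + 1))).
  assert (Hdel3 : 0 < del3) by (apply Rdiv_lt_0_compat; lra).
  exists (Rmin del1 (Rmin del2 del3)); split.
  { repeat apply Rmin_pos; assumption. }
  intros eps' x' Heps' Hclose Hxx'.
  pose proof (Rmin_l del1 (Rmin del2 del3)); pose proof (Rmin_r del1 (Rmin del2 del3)).
  pose proof (Rmin_l del2 del3); pose proof (Rmin_r del2 del3).
  pose proof (Horbit eps' Heps' ltac:(lra)) as Hfar.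
  pose proof (Hlip eps' Heps' ltac:(lra) x x') as Hnear.
  assert (HKdel3 : K * del3 < eta / 2).
  { unfold del3; apply (Rmult_lt_reg_r (2 * (K + 1))); [lra |].
    replace (K * (eta / (2 * (K + 1))) * (2 * (K + 1))) with (K * eta) by (field; lra).
    nra. }
  assert (K * dist M x x' <= K * del3) by (apply Rmult_le_compat_l; lra).
  pose proof (dist_tri M (H eps x) (H eps' x') (H eps' x)).
  lra.
Qed.

Section AbelianGroup.
Variables (E : R -> Prop) (mul : R -> R -> R) (e : R) (inv : R -> R).
Hypothesis Hgrp : abelian_group_on E mul e inv.

Lemma inv_mul_cancel_left (a b : R) : E a -> E b -> mul (inv a) (mul a b) = b.
Proof.
  destruct Hgrp as (_ & _ & Hinv & Hassoc & _ & Hid & Hlinv).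
  intros Ha Hb; rewrite <- Hassoc, Hlinv; auto.
Qed.

Lemma mul_inv_cancel_left (a b : R) : E a -> E b -> mul a (mul (inv a) b) = b.
Proof.
  destruct Hgrp as (_ & _ & Hinv & Hassoc & Hcomm & Hid & Hlinv).
  intros Ha Hb; rewrite <- Hassoc, (Hcomm a (inv a)), Hlinv; auto.
Qed.

Lemma le_inv_swap (eps t : R) :
  RG1 E mul -> E eps -> E t -> eps <= inv t -> t <= inv eps.
Proof.
  destruct Hgrp as (Hmul & _ & Hinv & _ & Hcomm & _ & _).
  intros Hmono Heps Ht Hle.
  (* translate both sides by t * eps^-1 *)
  pose proof (Hmono eps (inv t) (mul t (inv eps)) Heps (Hinv t Ht)
                (Hmul _ _ Ht (Hinv eps Heps)) Hle) as Htr.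
  rewrite (Hcomm t (inv eps)), mul_inv_cancel_left, (Hcomm (inv eps) t),
    inv_mul_cancel_left in Htr; auto.
Qed.

End AbelianGroup.

Lemma unbounded_of_naturals (E : R -> Prop) :
  (forall n : nat, E (INR (S n))) -> forall A, exists t, E t /\ A <= t.
Proof.
  intros Hnat A; destruct (INR_unbounded A) as [n Hn].
  exists (INR (S n)); split; [apply Hnat | rewrite S_INR; lra].
Qed.

Section ContractionFlow.
Variables (E : R -> Prop) (mul : R -> R -> R) (e : R) (inv : R -> R).
Variables (M : Metric_Space) (H : R -> Base M -> Base M).
Hypothesis Hgrp : abelian_group_on E mul e inv.
Hypothesis Hnat : forall n : nat, E (INR (S n)).
Hypothesis Hmulc : cont2_on E mul.
Hypothesis Hcompose : forall eps eps', E eps -> E eps' ->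
  forall x, H eps (H eps' x) = H (mul eps eps') x.
Hypothesis Hlip : forall eps, E eps -> exists L, forall x y, x <> y ->
  dist M (H eps x) (H eps y) / dist M x y <= L.
Hypothesis Hcontract : forall eta, 0 < eta -> exists A, forall eps, E eps -> A <= eps ->
  forall x y, x <> y -> dist M (H eps x) (H eps y) / dist M x y <= eta.

Lemma flow_eventually_lipschitz (eta : R) :
  0 < eta -> exists A, forall eps, E eps -> A <= eps -> lipschitz M (H eps) eta.
Proof.
  intros Heta; destruct (Hcontract eta Heta) as [A HA].
  exists A; intros eps Heps HAeps.
  rewrite <- (Rmax_right 0 eta) by lra.
  now apply lipschitz_of_ratio_le, HA.
Qed.

Lemma flow_locally_equilipschitz (eps : R) : E eps ->
  exists del K, 0 < del /\ 0 <= K /\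
    forall eps', E eps' -> Rabs (eps' - eps) < del -> lipschitz M (H eps') K.
Proof.
  pose proof Hgrp as (Hmul & _ & Hinv & _ & Hcomm & _ & _).
  intros Heps.
  destruct (flow_eventually_lipschitz 1 ltac:(lra)) as [A HA].
  destruct (unbounded_of_naturals E Hnat (A + 1)) as [t [Ht HAt]].
  set (c := mul (inv eps) t).
  assert (Hc : E c) by (unfold c; auto).
  destruct (Hlip (inv c) (Hinv c Hc)) as [L HL].
  destruct (Hmulc eps c Heps Hc 1 ltac:(lra)) as [del [Hdel Hnear]].
  exists del, (Rmax 0 L); split; [exact Hdel | split; [apply Rmax_l |]].
  intros eps' Heps' Hclose.
  assert (Hlarge : A <= mul eps' c).
  { pose proof (Hnear eps' c Heps' Hc Hclose
                  ltac:(rewrite Rminus_diag, Rabs_R0; lra)) as Hmc.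
    unfold c in Hmc at 2; rewrite (mul_inv_cancel_left E mul e inv Hgrp) in Hmc by auto.
    apply Rabs_def2 in Hmc; lra. }
  assert (Hfactor : forall z, H eps' z = H (inv c) (H (mul eps' c) z)).
  { intro z; rewrite Hcompose, (Hcomm eps' c), (inv_mul_cancel_left E mul e inv Hgrp); auto. }
  assert (Hcomp : lipschitz M (fun z => H (inv c) (H (mul eps' c) z)) (Rmax 0 L * 1)).
  { apply lipschitz_comp; [apply Rmax_l | now apply lipschitz_of_ratio_le |].
    apply HA; auto. }
  intros x y; rewrite !Hfactor, <- (Rmult_1_r (Rmax 0 L)); apply Hcomp.
Qed.

Lemma flow_common_fixed_point :
  ms_complete M -> Base M -> exists w, forall s, E s -> H s w = w.
Proof.
  pose proof Hgrp as (_ & _ & _ & _ & Hcomm & _ & _).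
  intros Hcomplete x0.
  destruct (flow_eventually_lipschitz (/ 2) ltac:(lra)) as [A HA].
  destruct (unbounded_of_naturals E Hnat A) as [t0 [Ht0 HAt0]].
  pose proof (HA t0 Ht0 HAt0) as Hhalf.
  destruct (contraction_fixed_point M (H t0) (/ 2) Hcomplete x0 ltac:(lra) Hhalf)
    as [w Hw].
  exists w; intros s Hs.
  apply (lipschitz_fixed_point_unique M (H t0) (/ 2)); auto; [lra |].
  rewrite Hcompose, Hcomm, <- Hcompose, Hw; auto.
Qed.

Lemma flow_absorptive :
  RG1 E mul -> ms_complete M -> Base M -> absorptive E inv M H.
Proof.
  pose proof Hgrp as (_ & _ & Hinv & _ & _ & _ & _).
  intros Hmono Hcomplete x0.
  destruct (flow_common_fixed_point Hcomplete x0) as [w Hw].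
  exists w; intros V [r [Hr HV]] x.
  set (D := dist M w x).
  assert (HD : 0 <= D) by (pose proof (dist_pos M w x); unfold D; lra).
  set (eta := r / (2 * (D + 1))).
  assert (Heta : 0 < eta) by (apply Rdiv_lt_0_compat; lra).
  destruct (flow_eventually_lipschitz eta Heta) as [A HA].
  destruct (unbounded_of_naturals E Hnat A) as [t [Ht HAt]].
  exists (fun u => dist M x u < 1); split; [exists 1; split; [lra | auto] |].
  exists (inv t); split; [auto |].
  intros eps Heps Hle u Hu.
  pose proof (le_inv_swap E mul e inv Hgrp eps t Hmono Heps Ht Hle) as Htinv.
  apply HV; rewrite <- (Hw (inv eps) (Hinv eps Heps)) at 1.
  eapply Rle_lt_trans; [apply (HA (inv eps) (Hinv eps Heps) ltac:(lra)) |].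
  pose proof (dist_tri M w u x) as Htri; fold D in Htri.
  assert (eta * dist M w u <= eta * (D + 1)) by (apply Rmult_le_compat_l; lra).
  assert (eta * (D + 1) = r / 2) by (unfold eta; field; lra).
  lra.
Qed.

End ContractionFlow.

Theorem proposition2p5 (E : R -> Prop) (mul : R -> R -> R) (e : R) (inv : R -> R)
    (M : Metric_Space) (H : R -> Base M -> Base M) :
  contraction_flow E mul e inv M H ->
  action E mul e M H /\ continuous_action E M H /\ absorptive E inv M H.
Proof.
  intros (Hcomplete & _ & [x0 _] & HRgroup & Hact & Horbit & Hlip & Hcontract).
  destruct HRgroup as (Hgrp & Hnat & Hmono & [Hmulc _] & _).
  pose proof (proj1 (proj2 Hact)) as Hcompose.
  split; [exact Hact | split].
  - apply continuous_action_of_locally_equilipschitz; [exact Horbit |].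
    exact (flow_locally_equilipschitz E mul e inv M H Hgrp Hnat Hmulc Hcompose Hlip Hcontract).
  - exact (flow_absorptive E mul e inv M H Hgrp Hnat Hcompose Hcontract Hmono Hcomplete x0).
Qed.
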